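(* Let $(W,W')$ be random vectors in $\mathbb{Z}^d$ such that $(W,W')$ and $(W',W)$ have the same distribution, with $\mathbb{E}|W'-W|^2<\infty$. Put $\xi:=W'-W$, let $\mathcal J:=\{J\in\mathbb{Z}^d: q^J:=\mathbb{P}[\xi=J]>0\}$, and suppose that for each $1\le j\le d$ there are $J^{(j)}_1,\dots,J^{(j)}_{r(j)}\in\mathcal J$ with $\sum_{l=1}^{r(j)}J^{(j)}_l=e^{(j)}$ (fixed choices). For $Q^J(W):=\mathbb{P}[\xi=J\mid W]$ let $u^J:=(q^J)^{-1}\mathbb{E}|Q^J(W)-q^J|$, $\tilde u_j:=\sum_{l=1}^{r(j)}(u^{J^{(j)}_l}+u^{-J^{(j)}_l})$, $\tilde u^*:=\max_j\tilde u_j$ and $u^*:=\sup_{J\in\mathcal J}u^J$. Then for each $1\le j\le d$ and each $J\in\mathcal J$: (i) $d_{TV}(\mathcal{L}(W+e^{(j)}),\mathcal{L}(W))\le\tilde u_j\le\tilde u^*$; (ii) $d_{TV}(\mathcal{L}(W+e^{(j)}\mid\xi=J),\mathcal{L}(W\mid\xi=J))\le\tilde u_j+2u^J\le\tilde u^*+2u^*$. Furthermore, with $\sigma^2:=\mathbb{E}\{\xi\xi^T\}$ and $R_2(W):=\mathbb{E}\{\xi\xi^T\mid W\}-\sigma^2$, (iii) $\mathbb{E}\|R_2(W)\|_1\le d\,\mathrm{Tr}(\sigma^2)\,u^*$.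
   Context: $\|M\|_1:=\sum_{i,j}|M_{ij}|$; $e^{(j)}$ is the $j$-th coordinate vector. (By exchangeability, $q^{-J}=q^J$, so $-J\in\mathcal J$ whenever $J\in\mathcal J$.) *)

From Stdlib Require Import Reals ZArith List Classical ClassicalEpsilon ClassicalDescription.
Import ListNotations.
Open Scope R_scope.

Definition sum_list {T : Type} (f : T -> R) (l : list T) : R :=
  fold_right (fun x acc => f x + acc) 0 l.

Definition has_sum {T : Type} (f : T -> R) (s : R) : Prop :=
  forall eps, 0 < eps -> exists F : list T, NoDup F /\
    forall G : list T, NoDup G -> incl F G -> Rabs (sum_list f G - s) < eps.

(* the sum (0 if not summable) *)
Definition Sum {T : Type} (f : T -> R) : R :=
  match excluded_middle_informative (exists s, has_sum f s) with
  | left H => proj1_sig (constructive_indefinite_description _ H)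
  | right _ => 0
  end.

(* supremum (0 if no least upper bound exists) *)
Definition Rsup (E : R -> Prop) : R :=
  match excluded_middle_informative (exists m, is_lub E m) with
  | left H => proj1_sig (constructive_indefinite_description _ H)
  | right _ => 0
  end.

(* ---------- vectors of Z^d as lists of length d ---------- *)
Definition vec := list Z.
Definition veq_dec := list_eq_dec Z.eq_dec.
Definition vadd (u v : vec) : vec := map (fun ab => (fst ab + snd ab)%Z) (combine u v).
Definition vsub (u v : vec) : vec := map (fun ab => (fst ab - snd ab)%Z) (combine u v).
Definition vneg (u : vec) : vec := map Z.opp u.
Definition zeros (d : nat) : vec := repeat 0%Z d.
(* e^{(j)}, j = 0..d-1 (0-based) *)
Definition unitv (d j : nat) : vec :=
  map (fun i => if Nat.eqb i j then 1%Z else 0%Z) (seq 0 d).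
Definition vsum (d : nat) (Js : list vec) : vec := fold_right vadd (zeros d) Js.
Definition norm2 (v : vec) : R := fold_right (fun x acc => IZR x * IZR x + acc) 0 v.

(* p w w' = P[W = w, W' = w'] : joint pmf of (W,W') on Z^d x Z^d *)
Definition is_joint_pmf (d : nat) (p : vec -> vec -> R) : Prop :=
  (forall w w', 0 <= p w w') /\
  (forall w w', p w w' <> 0 -> length w = d /\ length w' = d) /\
  has_sum (fun ww : vec * vec => p (fst ww) (snd ww)) 1.

Definition second_moment_finite (p : vec -> vec -> R) : Prop :=
  exists s, has_sum (fun ww : vec * vec => p (fst ww) (snd ww) * norm2 (vsub (snd ww) (fst ww))) s.

Definition pW (p : vec -> vec -> R) (w : vec) : R := Sum (fun w' => p w w').
Definition pWxi (p : vec -> vec -> R) (w J : vec) : R :=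
  Sum (fun w' => if veq_dec (vsub w' w) J then p w w' else 0).
Definition qJ (p : vec -> vec -> R) (J : vec) : R := Sum (fun w => pWxi p w J).
(* Q^J(w) = P[xi = J | W = w] (a version; 0 off the support of W) *)
Definition QJ (p : vec -> vec -> R) (J w : vec) : R :=
  if Rlt_dec 0 (pW p w) then pWxi p w J / pW p w else 0.
Definition uJ (p : vec -> vec -> R) (J : vec) : R :=
  / qJ p J * Sum (fun w => pW p w * Rabs (QJ p J w - qJ p J)).
Definition ut (p : vec -> vec -> R) (Js : list vec) : R :=
  sum_list (fun J => uJ p J + uJ p (vneg J)) Js.
Definition utstar (d : nat) (p : vec -> vec -> R) (Jc : nat -> list vec) : R :=
  fold_right Rmax 0 (map (fun j => ut p (Jc j)) (seq 0 d)).
Definition ustar (p : vec -> vec -> R) : R :=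
  Rsup (fun x => exists J, 0 < qJ p J /\ x = uJ p J).

Definition push (f : vec -> vec) (mu : vec -> R) (x : vec) : R :=
  Sum (fun y => if veq_dec (f y) x then mu y else 0).
Definition prob (mu : vec -> R) (A : vec -> bool) : R :=
  Sum (fun x => if A x then mu x else 0).
Definition dTV (mu nu : vec -> R) : R :=
  Rsup (fun r => exists A : vec -> bool, r = Rabs (prob mu A - prob nu A)).

Definition condW (p : vec -> vec -> R) (J : vec) (w : vec) : R := pWxi p w J / qJ p J.

(* i-th coordinate of xi = W' - W (0-based) *)
Definition xc (i : nat) (ww : vec * vec) : R := IZR (nth i (vsub (snd ww) (fst ww)) 0%Z).
Definition sigma2 (p : vec -> vec -> R) (i k : nat) : R :=
  Sum (fun ww : vec * vec => p (fst ww) (snd ww) * (xc i ww * xc k ww)).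
(* E[xi_i xi_k | W = w] (a version; 0 off the support of W) *)
Definition condxx (p : vec -> vec -> R) (i k : nat) (w : vec) : R :=
  if Rlt_dec 0 (pW p w) then Sum (fun w' => p w w' * (xc i (w, w') * xc k (w, w'))) / pW p w else 0.
Definition ER2norm1 (d : nat) (p : vec -> vec -> R) : R :=
  Sum (fun w => pW p w *
    sum_list (fun i => sum_list (fun k => Rabs (condxx p i k w - sigma2 p i k)) (seq 0 d)) (seq 0 d)).
Definition trace_sigma2 (d : nat) (p : vec -> vec -> R) : R :=
  sum_list (fun i => sigma2 p i i) (seq 0 d).

(** Everything is measured by [dev J w = |P[W = w, xi = J] - P[W = w] q^J|], whose total mass
    is [q^J u^J]. By exchangeability [P[W = y - J, xi = J] = P[W = y, xi = -J]] and
    [q^-J = q^J], so [P[W = y - J]] and [P[W = y]] are both close to the same number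
    [P[W = y, xi = -J] / q^J]: shifting the law of [W] by one jump [J] moves it by at most
    [u^J + u^-J] in [l^1], and writing [e^(j)] as a sum of jumps gives (i) by the triangle
    inequality. The conditional law [L(W | xi = J)] is within [u^J] of [L(W)] in [l^1], which
    gives (ii). For (iii), [P[W = w] R_2(w)_ik = sum_J J_i J_k (P[W = w, xi = J] - P[W = w] q^J)],
    so [E|R_2(W)_ik| <= sum_J |J_i J_k| q^J u^J <= u^* (sigma_ii + sigma_kk) / 2]. *)

From Stdlib Require Import Reals ZArith List Lra Lia FinFun.
From Stdlib Require Import Classical ClassicalEpsilon ClassicalDescription FunctionalExtensionality.
Import ListNotations.
Open Scope R_scope.

Definition classic_eq_dec {T : Type} (x y : T) : {x = y} + {x <> y} :=
  excluded_middle_informative (x = y).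

(** * Finite and unconditional sums *)

Section SumList.
Context {T : Type}.
Implicit Types (f g : T -> R) (l : list T).

Lemma sum_list_app f l1 l2 : sum_list f (l1 ++ l2) = sum_list f l1 + sum_list f l2.
Proof. induction l1; simpl; [lra|]. rewrite IHl1; lra. Qed.

Lemma sum_list_plus f g l : sum_list (fun x => f x + g x) l = sum_list f l + sum_list g l.
Proof. induction l; simpl; [lra|]. rewrite IHl; lra. Qed.

Lemma sum_list_scal c f l : sum_list (fun x => c * f x) l = c * sum_list f l.
Proof. induction l; simpl; [lra|]. rewrite IHl; lra. Qed.

Lemma sum_list_const c l : sum_list (fun _ => c) l = INR (length l) * c.
Proof. induction l; simpl length; [simpl; lra|]. rewrite S_INR; simpl; rewrite IHl; lra. Qed.

Lemma sum_list_ext f g l : (forall x, In x l -> f x = g x) -> sum_list f l = sum_list g l.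
Proof. induction l; simpl; intros H; [lra|]. rewrite H, IHl; auto. Qed.

Lemma sum_list_le f g l : (forall x, In x l -> f x <= g x) -> sum_list f l <= sum_list g l.
Proof.
  induction l as [|a l IH]; simpl; intros H; [lra|].
  pose proof (H a (or_introl eq_refl)). pose proof (IH (fun x h => H x (or_intror h))). lra.
Qed.

Lemma sum_list_nonneg f l : (forall x, 0 <= f x) -> 0 <= sum_list f l.
Proof. intros H. induction l; simpl; [lra|]. specialize (H a); lra. Qed.

Lemma sum_list_zero f l : (forall x, In x l -> f x = 0) -> sum_list f l = 0.
Proof. induction l; simpl; intros H; [lra|]. rewrite H, IHl; auto; lra. Qed.

Lemma sum_list_remove_le f a l : (forall x, 0 <= f x) ->
  sum_list f (remove classic_eq_dec a l) <= sum_list f l.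
Proof.
  intros Hf. induction l as [|b l IH]; simpl; [lra|].
  destruct (classic_eq_dec a b); simpl; specialize (Hf b); lra.
Qed.

Lemma sum_list_remove_In f a l : (forall x, 0 <= f x) -> In a l ->
  f a + sum_list f (remove classic_eq_dec a l) <= sum_list f l.
Proof.
  intros Hf. induction l as [|b l IH]; simpl; [tauto|]. intros Hin.
  destruct (classic_eq_dec a b) as [<-|Hab].
  - pose proof (sum_list_remove_le f a l Hf). lra.
  - simpl. destruct Hin as [->|Hin]; [congruence|]. specialize (IH Hin). lra.
Qed.

Lemma sum_list_incl_le f l1 l2 : (forall x, 0 <= f x) -> NoDup l1 -> incl l1 l2 ->
  sum_list f l1 <= sum_list f l2.
Proof.
  intros Hf Hl1. revert l2. induction Hl1 as [|a l1 Ha _ IH]; intros l2 Hincl.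
  - apply sum_list_nonneg, Hf.
  - assert (Hrem : incl l1 (remove classic_eq_dec a l2)).
    { intros x Hx. apply in_in_remove; [intros ->; auto|apply Hincl; right; auto]. }
    specialize (IH _ Hrem). pose proof (sum_list_remove_In f a l2 Hf (Hincl a (or_introl eq_refl))).
    simpl; lra.
Qed.

Lemma sum_list_single f x0 l : NoDup l -> In x0 l -> (forall x, x <> x0 -> f x = 0) ->
  sum_list f l = f x0.
Proof.
  intros Hl. induction Hl as [|a l Ha _ IH]; simpl; [tauto|]. intros [->|Hin] Hz.
  - rewrite sum_list_zero; [lra|]. intros x Hx. apply Hz. intros ->; auto.
  - rewrite IH, Hz; auto; [lra|]. intros ->; auto.
Qed.

Lemma sum_list_sum_list_avg f l :
  sum_list (fun i => sum_list (fun k => (f i + f k) / 2) l) l = INR (length l) * sum_list f l.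
Proof.
  rewrite (sum_list_ext _ (fun i => INR (length l) * (/ 2 * f i) + / 2 * sum_list f l)).
  - rewrite sum_list_plus, sum_list_scal, sum_list_scal, sum_list_const. field.
  - intros i _. rewrite <- sum_list_scal, <- sum_list_const, <- sum_list_plus.
    apply sum_list_ext; intros; field.
Qed.
End SumList.

Lemma sum_list_swap {A B : Type} (F : A -> B -> R) LA LB :
  sum_list (fun b => sum_list (fun a => F a b) LA) LB =
  sum_list (fun a => sum_list (fun b => F a b) LB) LA.
Proof.
  induction LA as [|a LA IH]; simpl; [apply sum_list_zero; auto|].
  rewrite sum_list_plus, IH; auto.
Qed.

Lemma sum_list_map {A B : Type} (f : B -> R) (g : A -> B) l :
  sum_list f (map g l) = sum_list (fun x => f (g x)) l.
Proof. induction l; simpl; auto. rewrite IHl; auto. Qed.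

Lemma nodup_app_incl {T : Type} (l1 l2 : list T) :
  NoDup (nodup classic_eq_dec (l1 ++ l2)) /\
  incl l1 (nodup classic_eq_dec (l1 ++ l2)) /\ incl l2 (nodup classic_eq_dec (l1 ++ l2)).
Proof.
  split; [apply NoDup_nodup|]. split; intros x Hx; apply nodup_In; apply in_or_app; auto.
Qed.

Section Summation.
Context {T : Type}.
Implicit Types (f g : T -> R).

Definition Summable f := exists s, has_sum f s.

Lemma has_sum_unique f s t : has_sum f s -> has_sum f t -> s = t.
Proof.
  intros Hs Ht. destruct (Req_dec s t) as [|Hne]; auto. exfalso.
  set (e := Rabs (s - t) / 2).
  assert (He : 0 < e) by (unfold e; pose proof (Rabs_pos_lt (s - t) ltac:(lra)); lra).
  destruct (Hs e He) as [F1 [_ H1]]. destruct (Ht e He) as [F2 [_ H2]].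
  destruct (nodup_app_incl F1 F2) as [Hnd [I1 I2]].
  specialize (H1 _ Hnd I1). specialize (H2 _ Hnd I2). unfold e in *. split_Rabs; lra.
Qed.

Lemma Sum_eq f s : has_sum f s -> Sum f = s.
Proof.
  intros H. unfold Sum. destruct excluded_middle_informative as [Hex|Hno].
  - destruct (constructive_indefinite_description _ Hex) as [t Ht]; simpl.
    eapply has_sum_unique; eauto.
  - exfalso; eauto.
Qed.

Lemma Sum_spec f : Summable f -> has_sum f (Sum f).
Proof. intros [s Hs]. rewrite (Sum_eq f s Hs); auto. Qed.

Lemma Sum_not_summable f : ~ Summable f -> Sum f = 0.
Proof. intros H. unfold Sum. destruct excluded_middle_informative; tauto. Qed.

Lemma has_sum_ext f g s : (forall x, f x = g x) -> has_sum f s -> has_sum g s.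
Proof.
  intros E H e He. destruct (H e He) as [F [Hnd HF]]. exists F; split; auto.
  intros G HG Hincl. rewrite <- (sum_list_ext f g); auto.
Qed.

Lemma Sum_ext f g : (forall x, f x = g x) -> Sum f = Sum g.
Proof. intros E. now rewrite (functional_extensionality f g E). Qed.

Lemma Summable_ext f g : (forall x, f x = g x) -> Summable f -> Summable g.
Proof. intros E [s Hs]. exists s; eapply has_sum_ext; eauto. Qed.

Lemma has_sum_zero : has_sum (fun _ : T => 0) 0.
Proof.
  intros e He. exists []; split; [constructor|]. intros. rewrite sum_list_zero; auto. split_Rabs; lra.
Qed.

Lemma Sum_zero f : (forall x, f x = 0) -> Sum f = 0.
Proof. intros H. rewrite (Sum_ext f (fun _ => 0)); auto. apply Sum_eq, has_sum_zero. Qed.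

Lemma has_sum_plus f g s t : has_sum f s -> has_sum g t -> has_sum (fun x => f x + g x) (s + t).
Proof.
  intros Hf Hg e He. destruct (Hf (e/2) ltac:(lra)) as [F1 [_ H1]].
  destruct (Hg (e/2) ltac:(lra)) as [F2 [_ H2]].
  destruct (nodup_app_incl F1 F2) as [Hnd [I1 I2]].
  exists (nodup classic_eq_dec (F1 ++ F2)); split; auto. intros G HG Hincl.
  rewrite sum_list_plus. specialize (H1 G HG (incl_tran I1 Hincl)).
  specialize (H2 G HG (incl_tran I2 Hincl)). split_Rabs; lra.
Qed.

Lemma has_sum_scal c f s : has_sum f s -> has_sum (fun x => c * f x) (c * s).
Proof.
  intros Hf e He. pose proof (Rabs_pos c) as Hc.
  destruct (Hf (e / (Rabs c + 1)) ltac:(apply Rdiv_lt_0_compat; lra)) as [F [Hnd HF]].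
  exists F; split; auto. intros G HG Hincl. specialize (HF G HG Hincl).
  rewrite sum_list_scal, <- Rmult_minus_distr_l, Rabs_mult.
  apply Rmult_lt_compat_r with (r := Rabs c + 1) in HF; [|lra].
  unfold Rdiv in HF. rewrite Rmult_assoc, Rinv_l, Rmult_1_r in HF by lra.
  pose proof (Rabs_pos (sum_list f G - s)). nra.
Qed.

Lemma has_sum_minus f g s t : has_sum f s -> has_sum g t -> has_sum (fun x => f x - g x) (s - t).
Proof.
  intros Hf Hg. apply (has_sum_scal (-1)) in Hg.
  eapply has_sum_ext; [|replace (s - t) with (s + -1 * t) by ring; apply (has_sum_plus _ _ _ _ Hf Hg)].
  intros; simpl; ring.
Qed.

Lemma Summable_plus f g : Summable f -> Summable g -> Summable (fun x => f x + g x).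
Proof. intros [s Hs] [t Ht]. eexists; apply has_sum_plus; eauto. Qed.

Lemma Summable_minus f g : Summable f -> Summable g -> Summable (fun x => f x - g x).
Proof. intros [s Hs] [t Ht]. eexists; apply has_sum_minus; eauto. Qed.

Lemma Summable_scal c f : Summable f -> Summable (fun x => c * f x).
Proof. intros [s Hs]. eexists; apply has_sum_scal; eauto. Qed.

Lemma Sum_plus f g : Summable f -> Summable g -> Sum (fun x => f x + g x) = Sum f + Sum g.
Proof. intros Hf Hg. apply Sum_eq, has_sum_plus; apply Sum_spec; auto. Qed.

Lemma Sum_minus f g : Summable f -> Summable g -> Sum (fun x => f x - g x) = Sum f - Sum g.
Proof. intros Hf Hg. apply Sum_eq, has_sum_minus; apply Sum_spec; auto. Qed.

Lemma Sum_scal c f : Summable f -> Sum (fun x => c * f x) = c * Sum f.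
Proof. intros Hf. apply Sum_eq, has_sum_scal; apply Sum_spec; auto. Qed.

Lemma has_sum_approx f s e : has_sum f s -> 0 < e -> exists G, NoDup G /\ s - e < sum_list f G.
Proof.
  intros Hs He. destruct (Hs e He) as [F [Hnd HF]]. exists F; split; auto.
  specialize (HF F Hnd (incl_refl _)). split_Rabs; lra.
Qed.

Lemma Sum_single f x0 : (forall x, x <> x0 -> f x = 0) -> Sum f = f x0.
Proof.
  intros Hz. apply Sum_eq. intros e He. exists [x0]; split; [repeat constructor; simpl; tauto|].
  intros G HG Hincl. rewrite (sum_list_single f x0); auto; [split_Rabs; lra|apply Hincl; left; auto].
Qed.

Lemma Sum_sum_list {I : Type} (F : I -> T -> R) (l : list I) :
  (forall i, In i l -> Summable (F i)) ->
  Summable (fun x => sum_list (fun i => F i x) l) /\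
  Sum (fun x => sum_list (fun i => F i x) l) = sum_list (fun i => Sum (F i)) l.
Proof.
  induction l as [|a l IH]; intros H; simpl.
  - split; [exists 0; apply has_sum_zero|]. apply Sum_eq, has_sum_zero.
  - destruct IH as [S1 E1]; [intros; apply H; right; auto|].
    assert (Sa : Summable (F a)) by (apply H; left; auto).
    split; [apply Summable_plus; auto|]. rewrite Sum_plus, E1; auto.
Qed.

Section Nonneg.
Variable f : T -> R.
Hypothesis f_nonneg : forall x, 0 <= f x.

Lemma has_sum_nonneg_ub s : has_sum f s -> forall G, NoDup G -> sum_list f G <= s.
Proof.
  intros Hs G HG. apply Rnot_lt_le. intros Hlt.
  destruct (Hs (sum_list f G - s) ltac:(lra)) as [F [_ HF]].
  destruct (nodup_app_incl G F) as [Hnd [I1 I2]].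
  specialize (HF _ Hnd I2). pose proof (sum_list_incl_le f _ _ f_nonneg HG I1). split_Rabs; lra.
Qed.

Lemma has_sum_nonneg_bounded B : (forall G, NoDup G -> sum_list f G <= B) ->
  exists s, has_sum f s /\ s <= B.
Proof.
  intros HB. set (E := fun r => exists G, NoDup G /\ r = sum_list f G).
  assert (HE : bound E) by (exists B; intros r [G [HG ->]]; auto).
  assert (HE0 : exists r, E r) by (exists 0, []; split; [constructor|reflexivity]).
  destruct (completeness E HE HE0) as [s [Hub Hlub]].
  exists s; split; [|apply Hlub; intros r [G [HG ->]]; auto].
  intros e He. destruct (classic (exists G, NoDup G /\ s - e < sum_list f G)) as [[G [HG HGs]]|Hno].
  - exists G; split; auto. intros G' HG' Hincl.
    pose proof (sum_list_incl_le f _ _ f_nonneg HG Hincl).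
    assert (sum_list f G' <= s) by (apply Hub; exists G'; auto). split_Rabs; lra.
  - assert (Hup : is_upper_bound E (s - e)).
    { intros r [G [HG ->]]. apply Rnot_lt_le; intros Hl; apply Hno; eauto. }
    specialize (Hlub _ Hup). lra.
Qed.

Lemma Sum_nonneg : 0 <= Sum f.
Proof.
  destruct (classic (Summable f)) as [Hs|Hs]; [|rewrite Sum_not_summable; auto; lra].
  exact (has_sum_nonneg_ub _ (Sum_spec f Hs) [] (NoDup_nil _)).
Qed.

Lemma Sum_nonneg_ub G : Summable f -> NoDup G -> sum_list f G <= Sum f.
Proof. intros Hs HG. apply has_sum_nonneg_ub; auto. apply Sum_spec; auto. Qed.

Lemma Summable_nonneg_bounded B : (forall G, NoDup G -> sum_list f G <= B) ->
  Summable f /\ Sum f <= B.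
Proof.
  intros HB. destruct (has_sum_nonneg_bounded B HB) as [s [Hs Hle]].
  split; [exists s; auto|]. rewrite (Sum_eq _ _ Hs); auto.
Qed.

End Nonneg.

Lemma Summable_le f g : (forall x, 0 <= f x) -> (forall x, f x <= g x) -> Summable g -> Summable f.
Proof.
  intros Hf Hfg Hg. apply (Summable_nonneg_bounded f Hf (Sum g)). intros G HG.
  eapply Rle_trans; [apply sum_list_le; intros; apply Hfg|].
  apply Sum_nonneg_ub; auto. intros x; specialize (Hf x); specialize (Hfg x); lra.
Qed.

Lemma Sum_le f g : Summable f -> Summable g -> (forall x, f x <= g x) -> Sum f <= Sum g.
Proof.
  intros Hf Hg H. pose proof (Sum_nonneg (fun x => g x - f x) ltac:(intros x; specialize (H x); lra)).
  rewrite Sum_minus in *; auto. lra.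
Qed.

Lemma Summable_of_abs f : Summable (fun x => Rabs (f x)) -> Summable f.
Proof.
  intros Ha.
  assert (Hp : Summable (fun x => (Rabs (f x) + f x) / 2)).
  { apply (Summable_le _ (fun x => Rabs (f x))); auto; intros x; split_Rabs; lra. }
  assert (Hn : Summable (fun x => (Rabs (f x) - f x) / 2)).
  { apply (Summable_le _ (fun x => Rabs (f x))); auto; intros x; split_Rabs; lra. }
  eapply Summable_ext; [|apply (Summable_minus _ _ Hp Hn)]. intros x; simpl; lra.
Qed.

Lemma Rabs_Sum_le f : Summable (fun x => Rabs (f x)) -> Rabs (Sum f) <= Sum (fun x => Rabs (f x)).
Proof.
  intros Ha. pose proof (Summable_of_abs f Ha) as Hf.
  assert (Sum f <= Sum (fun x => Rabs (f x))) by (apply Sum_le; auto; intros; apply Rle_abs).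
  assert (Sum (fun x => -1 * f x) <= Sum (fun x => Rabs (f x))).
  { apply Sum_le; auto; [apply Summable_scal; auto|intros x; split_Rabs; lra]. }
  rewrite Sum_scal in *; auto. apply Rabs_le; lra.
Qed.
End Summation.

Section Reindex.
Context {A B : Type} (phi : A -> B) (psi : B -> A).
Hypotheses (psi_phi : forall x, psi (phi x) = x) (phi_psi : forall y, phi (psi y) = y).

Lemma has_sum_bij (f : B -> R) s : has_sum f s -> has_sum (fun x => f (phi x)) s.
Proof.
  assert (Hphi : Injective phi) by (intros x y E; rewrite <- (psi_phi x), <- (psi_phi y), E; auto).
  assert (Hpsi : Injective psi) by (intros x y E; rewrite <- (phi_psi x), <- (phi_psi y), E; auto).
  intros Hf e He. destruct (Hf e He) as [F [Hnd HF]].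
  exists (map psi F). split; [apply Injective_map_NoDup; auto|].
  intros G HG Hincl. rewrite <- (sum_list_map f phi). apply HF; [apply Injective_map_NoDup; auto|].
  intros y Hy. rewrite <- (phi_psi y). apply in_map, Hincl, in_map; auto.
Qed.

Lemma Summable_bij (f : B -> R) : Summable f -> Summable (fun x => f (phi x)).
Proof. intros [s Hs]. exists s. apply has_sum_bij; auto. Qed.

Lemma Sum_bij (f : B -> R) : Summable f -> Sum (fun x => f (phi x)) = Sum f.
Proof. intros Hs. apply Sum_eq, has_sum_bij, Sum_spec; auto. Qed.
End Reindex.

Lemma has_sum_swap {A B : Type} (F : A * B -> R) s :
  has_sum F s -> has_sum (fun x => F (snd x, fst x)) s.
Proof.
  apply (has_sum_bij (fun x : B * A => (snd x, fst x)) (fun y : A * B => (snd y, fst y)));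
    intros [a b]; reflexivity.
Qed.

Lemma NoDup_list_prod {A B : Type} (LA : list A) (LB : list B) :
  NoDup LA -> NoDup LB -> NoDup (list_prod LA LB).
Proof.
  intros HA HB. induction HA as [|a LA Ha _ IH]; simpl; [constructor|].
  apply NoDup_app; auto.
  - apply Injective_map_NoDup; auto. intros x y E; injection E; auto.
  - intros [x y] H1 H2. apply in_map_iff in H1. destruct H1 as [b [E _]]. injection E; intros; subst.
    apply in_prod_iff in H2. tauto.
Qed.

Lemma incl_list_prod_proj {A B : Type} (G : list (A * B)) :
  incl G (list_prod (nodup classic_eq_dec (map fst G)) (nodup classic_eq_dec (map snd G))).
Proof.
  intros [a b] H. apply in_prod_iff; split; apply nodup_In.
  - change a with (fst (a, b)); apply in_map; auto.
  - change b with (snd (a, b)); apply in_map; auto.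
Qed.

Section Tonelli.
Context {A B : Type}.
Variable F : A * B -> R.
Hypothesis F_nonneg : forall x, 0 <= F x.

Lemma sum_list_list_prod LA LB :
  sum_list F (list_prod LA LB) = sum_list (fun a => sum_list (fun b => F (a, b)) LB) LA.
Proof. induction LA as [|a LA IH]; simpl; auto. rewrite sum_list_app, IH, sum_list_map; auto. Qed.

Lemma Summable_slice s a : has_sum F s -> Summable (fun b => F (a, b)).
Proof.
  intros Hs. apply (Summable_nonneg_bounded _ (fun b => F_nonneg _) s).
  intros LB HB. rewrite <- (sum_list_map F (pair a)). apply (has_sum_nonneg_ub F F_nonneg); auto.
  apply Injective_map_NoDup; auto. intros x y E; injection E; auto.
Qed.

Lemma has_sum_iter s : has_sum F s -> has_sum (fun a => Sum (fun b => F (a, b))) s.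
Proof.
  intros Hs. pose proof (fun a => Summable_slice s a Hs) as Hsl.
  assert (Hnn : forall a, 0 <= Sum (fun b => F (a, b))) by (intros; apply Sum_nonneg; auto).
  destruct (has_sum_nonneg_bounded _ Hnn s) as [t [Ht Hts]].
  - intros LA HA. destruct (Sum_sum_list (fun a b => F (a, b)) LA) as [_ E]; [intros; auto|].
    rewrite <- E. apply Summable_nonneg_bounded; [intros; apply sum_list_nonneg; auto|].
    intros LB HB. eapply Rle_trans; [|apply (has_sum_nonneg_ub F F_nonneg s Hs (list_prod LA LB));
      apply NoDup_list_prod; auto].
    rewrite sum_list_list_prod, (sum_list_swap (fun a b => F (a, b))). lra.
  - replace s with t; auto. apply Rle_antisym; auto. apply Rnot_lt_le. intros Hlt.
    destruct (has_sum_approx F s (s - t) Hs ltac:(lra)) as [G [HG HGs]].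
    set (LA := nodup classic_eq_dec (map fst G)). set (LB := nodup classic_eq_dec (map snd G)).
    assert (H1 : sum_list F G <= sum_list F (list_prod LA LB))
      by (apply sum_list_incl_le; auto; apply incl_list_prod_proj).
    assert (H2 : sum_list (fun a => sum_list (fun b => F (a, b)) LB) LA
                 <= sum_list (fun a => Sum (fun b => F (a, b))) LA).
    { apply sum_list_le; intros. apply Sum_nonneg_ub; auto. apply NoDup_nodup. }
    assert (H3 : sum_list (fun a => Sum (fun b => F (a, b))) LA <= t).
    { apply (has_sum_nonneg_ub _ Hnn); auto. apply NoDup_nodup. }
    rewrite sum_list_list_prod in H1. lra.
Qed.

Lemma has_sum_of_iter (g : A -> R) t :
  (forall a, has_sum (fun b => F (a, b)) (g a)) -> has_sum g t -> has_sum F t.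
Proof.
  intros Hg Ht.
  assert (Hgnn : forall a, 0 <= g a)
    by (intros a; exact (has_sum_nonneg_ub _ (fun b => F_nonneg _) _ (Hg a) [] (NoDup_nil _))).
  destruct (has_sum_nonneg_bounded F F_nonneg t) as [s [Hs _]].
  - intros G HG. eapply Rle_trans; [apply sum_list_incl_le; eauto; apply incl_list_prod_proj|].
    rewrite sum_list_list_prod.
    eapply Rle_trans; [|apply (has_sum_nonneg_ub g Hgnn t Ht); apply NoDup_nodup].
    apply sum_list_le; intros.
    apply (has_sum_nonneg_ub _ (fun b => F_nonneg _)); auto. apply NoDup_nodup.
  - replace t with s; auto. apply (has_sum_unique (fun a => Sum (fun b => F (a, b)))).
    + apply has_sum_iter; auto.
    + eapply has_sum_ext; [|eauto]. intros a; symmetry; apply Sum_eq; auto.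
Qed.
End Tonelli.

Lemma has_sum_iter_swap {A B : Type} (F : A * B -> R) (g : A -> R) t :
  (forall x, 0 <= F x) -> (forall a, has_sum (fun b => F (a, b)) (g a)) -> has_sum g t ->
  has_sum (fun b => Sum (fun a => F (a, b))) t.
Proof.
  intros Hnn Hg Ht.
  apply (has_sum_iter (fun x => F (snd x, fst x)) (fun x => Hnn _)).
  apply has_sum_swap, (has_sum_of_iter F Hnn g); auto.
Qed.

(* Apply Tonelli to the positive and negative parts of [F]. *)
Lemma fubini {A B : Type} (F : A * B -> R) : Summable (fun x => Rabs (F x)) ->
  (forall a, Summable (fun b => F (a, b))) /\ has_sum (fun a => Sum (fun b => F (a, b))) (Sum F).
Proof.
  intros Ha. set (Fp := fun x => (Rabs (F x) + F x) / 2). set (Fn := fun x => (Rabs (F x) - F x) / 2).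
  assert (Fp_nn : forall x, 0 <= Fp x) by (intros; unfold Fp; split_Rabs; lra).
  assert (Fn_nn : forall x, 0 <= Fn x) by (intros; unfold Fn; split_Rabs; lra).
  assert (HFp : Summable Fp)
    by (apply (Summable_le _ (fun x => Rabs (F x))); auto; intros; unfold Fp; split_Rabs; lra).
  assert (HFn : Summable Fn)
    by (apply (Summable_le _ (fun x => Rabs (F x))); auto; intros; unfold Fn; split_Rabs; lra).
  assert (EF : forall x, F x = Fp x - Fn x) by (intros; unfold Fp, Fn; lra).
  pose proof (fun a => Summable_slice Fp Fp_nn _ a (Sum_spec _ HFp)) as Sp.
  pose proof (fun a => Summable_slice Fn Fn_nn _ a (Sum_spec _ HFn)) as Sn.
  split.
  - intros a. eapply Summable_ext; [|apply (Summable_minus _ _ (Sp a) (Sn a))]. intros; simpl; auto.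
  - rewrite (Sum_ext _ _ EF), Sum_minus by auto.
    eapply has_sum_ext; [|apply has_sum_minus;
      [apply (has_sum_iter Fp Fp_nn)|apply (has_sum_iter Fn Fn_nn)]; apply Sum_spec; auto].
    intros a. simpl. rewrite <- Sum_minus by auto. apply Sum_ext; intros; auto.
Qed.

(** * Suprema and total variation *)

Section Supremum.
Variable E : R -> Prop.
Hypothesis E_bounded : bound E.

Lemma Rsup_is_lub : (exists x, E x) -> is_lub E (Rsup E).
Proof.
  intros HE. unfold Rsup. destruct excluded_middle_informative as [Hex|Hno].
  - exact (proj2_sig (constructive_indefinite_description _ Hex)).
  - exfalso. apply Hno. destruct (completeness E E_bounded HE) as [m Hm]. eauto.
Qed.

Lemma Rsup_ge x : E x -> x <= Rsup E.
Proof. intros Hx. apply (Rsup_is_lub (ex_intro _ x Hx)); auto. Qed.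

Lemma Rsup_le b : (exists x, E x) -> is_upper_bound E b -> Rsup E <= b.
Proof. intros HE Hb. apply (Rsup_is_lub HE); auto. Qed.

(* An empty set has no least upper bound, so [Rsup] falls back to [0] on it. *)
Lemma Rsup_nonneg : (forall x, E x -> 0 <= x) -> 0 <= Rsup E.
Proof.
  intros Hnn. destruct (classic (exists x, E x)) as [[x Hx]|Hempty].
  - specialize (Hnn x Hx). pose proof (Rsup_ge x Hx). lra.
  - unfold Rsup. destruct excluded_middle_informative as [[m [Hub Hlub]]|]; [|lra].
    exfalso. assert (Hup : is_upper_bound E (m - 1)) by (intros x Hx; exfalso; eauto).
    specialize (Hlub _ Hup). lra.
Qed.
End Supremum.

Lemma dTV_le_Sum_abs (mu nu : vec -> R) : (forall x, 0 <= mu x) -> (forall x, 0 <= nu x) ->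
  Summable mu -> Summable nu -> dTV mu nu <= Sum (fun x => Rabs (mu x - nu x)).
Proof.
  intros Hmu Hnu Smu Snu.
  assert (Hrestr : forall (A : vec -> bool) x,
    Rabs ((if A x then mu x else 0) - (if A x then nu x else 0)) <= Rabs (mu x - nu x)).
  { intros A x. destruct (A x); [lra|]. rewrite Rminus_diag, Rabs_R0. apply Rabs_pos. }
  assert (Sabs : Summable (fun x => Rabs (mu x - nu x))).
  { apply (Summable_le _ (fun x => mu x + nu x)); [intros; apply Rabs_pos| |apply Summable_plus; auto].
    intros x; specialize (Hmu x); specialize (Hnu x); split_Rabs; lra. }
  assert (Hbound : forall A : vec -> bool,
    Rabs (prob mu A - prob nu A) <= Sum (fun x => Rabs (mu x - nu x))).
  { intros A. unfold prob.
    assert (S1 : Summable (fun x => if A x then mu x else 0))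
      by (apply (Summable_le _ mu); auto; intros x; destruct (A x); auto; lra).
    assert (S2 : Summable (fun x => if A x then nu x else 0))
      by (apply (Summable_le _ nu); auto; intros x; destruct (A x); auto; lra).
    assert (S12 : Summable (fun x => Rabs ((if A x then mu x else 0) - (if A x then nu x else 0))))
      by (apply (Summable_le _ _ (fun x => Rabs_pos _) (Hrestr A)); auto).
    rewrite <- Sum_minus by auto. eapply Rle_trans; [apply Rabs_Sum_le; auto|].
    apply Sum_le; auto. }
  apply Rsup_le.
  - exists (Sum (fun x => Rabs (mu x - nu x))). intros r [A ->]; auto.
  - exists (Rabs (prob mu (fun _ => true) - prob nu (fun _ => true))), (fun _ => true); auto.
  - intros r [A ->]; auto.
Qed.

(** * Vectors and translations of [Z^d] *)

Lemma length_vadd u v : length (vadd u v) = Nat.min (length u) (length v).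
Proof. unfold vadd. rewrite length_map, length_combine; auto. Qed.

Lemma length_vsub u v : length (vsub u v) = Nat.min (length u) (length v).
Proof. unfold vsub. rewrite length_map, length_combine; auto. Qed.

Lemma length_vneg u : length (vneg u) = length u.
Proof. unfold vneg; rewrite length_map; auto. Qed.

Lemma length_zeros d : length (zeros d) = d.
Proof. apply repeat_length. Qed.

Lemma length_vsum d Js : (forall J, In J Js -> length J = d) -> length (vsum d Js) = d.
Proof.
  induction Js as [|J Js IH]; simpl; intros H; [apply length_zeros|].
  rewrite length_vadd, IH, H; auto. lia.
Qed.

Ltac vec_induction u v :=
  unfold vadd, vsub, vneg; revert v; induction u as [|? u IH]; intros [|? v]; simpl;
  intros; try discriminate; auto; f_equal; try lia; apply IH; lia.

Lemma vadd_comm u v : vadd u v = vadd v u.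
Proof. vec_induction u v. Qed.

Lemma vadd_vsub_l w w' : length w = length w' -> vadd w (vsub w' w) = w'.
Proof. vec_induction w w'. Qed.

Lemma vsub_vadd_r y J : length y = length J -> vsub (vadd y J) J = y.
Proof. vec_induction y J. Qed.

Lemma vadd_vsub_r x J : length x = length J -> vadd (vsub x J) J = x.
Proof. vec_induction x J. Qed.

Lemma vadd_vneg y J : length y = length J -> vadd y (vneg J) = vsub y J.
Proof. vec_induction y J. Qed.

Lemma vsub_vadd x J s : length x = length J -> length J = length s ->
  vsub x (vadd J s) = vsub (vsub x s) J.
Proof.
  unfold vsub, vadd. revert J s.
  induction x as [|a x IH]; intros [|b J] [|c s]; simpl; intros; try discriminate; auto.
  f_equal; [lia|apply IH; lia].
Qed.

Lemma vsub_zeros x : vsub x (zeros (length x)) = x.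
Proof. unfold vsub, zeros. induction x; simpl; auto. rewrite IHx. f_equal. lia. Qed.

Lemma vneg_vneg s : vneg (vneg s) = s.
Proof. unfold vneg. rewrite map_map. induction s; simpl; auto. rewrite IHs, Z.opp_involutive; auto. Qed.

Lemma sq_nth_le_norm2 i v : IZR (nth i v 0%Z) * IZR (nth i v 0%Z) <= norm2 v.
Proof.
  assert (Hnn : forall u, 0 <= norm2 u) by (induction u; simpl; [lra|nra]).
  revert i; induction v as [|a v IH]; intros [|i]; simpl; try lra.
  - pose proof (Hnn v). lra.
  - specialize (IH i). nra.
Qed.

Section Translation.
Variable d : nat.

(* Translation by [s], made the identity unless both [s] and the argument lie in [Z^d], so that it
   is a bijection of [vec] for every [s]. *)
Definition translate (s y : vec) : vec :=
  if Nat.eq_dec (length s) d then if Nat.eq_dec (length y) d then vadd y s else y else y.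

Lemma translate_in s y : length s = d -> length y = d -> translate s y = vadd y s.
Proof.
  intros Hs Hy; unfold translate.
  destruct (Nat.eq_dec (length s) d), (Nat.eq_dec (length y) d); congruence.
Qed.

Lemma translate_out s y : length s <> d \/ length y <> d -> translate s y = y.
Proof.
  intros H; unfold translate. destruct (Nat.eq_dec (length s) d), (Nat.eq_dec (length y) d); tauto.
Qed.

Lemma translate_vneg_l s y : translate (vneg s) (translate s y) = y.
Proof.
  destruct (Nat.eq_dec (length s) d) as [Hs|Hs]; [destruct (Nat.eq_dec (length y) d) as [Hy|Hy]|].
  - rewrite (translate_in s y), translate_in; rewrite ?length_vadd, ?length_vneg; auto; try lia.
    rewrite vadd_vneg, vsub_vadd_r; rewrite ?length_vadd; auto; lia.
  - rewrite (translate_out s y), translate_out; auto.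
  - rewrite (translate_out s y), translate_out; rewrite ?length_vneg; auto.
Qed.

Lemma translate_vneg_r s y : translate s (translate (vneg s) y) = y.
Proof. rewrite <- (vneg_vneg s) at 1. apply translate_vneg_l. Qed.

Lemma vsub_translate w J : length w = d -> length (translate w J) = d -> vsub (translate w J) w = J.
Proof.
  intros Hw HwJ. destruct (Nat.eq_dec (length J) d) as [HJ|HJ].
  - rewrite translate_in, vsub_vadd_r; auto; lia.
  - rewrite translate_out in HwJ by auto. contradiction.
Qed.

Lemma translate_vneg_vadd J s y : length J = d -> length s = d ->
  translate (vneg (vadd J s)) y = translate (vneg J) (translate (vneg s) y).
Proof.
  intros HJ Hs. destruct (Nat.eq_dec (length y) d) as [Hy|Hy].
  - rewrite !(translate_in _ y); rewrite ?length_vneg, ?length_vadd; try lia.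
    rewrite translate_in; rewrite ?length_vadd, ?length_vneg; try lia.
    rewrite !vadd_vneg, vsub_vadd; rewrite ?length_vadd, ?length_vsub, ?length_vneg; auto; lia.
  - rewrite !(translate_out _ y); auto.
Qed.

Lemma translate_vneg_zeros y : translate (vneg (zeros d)) y = y.
Proof.
  destruct (Nat.eq_dec (length y) d) as [Hy|Hy]; [|apply translate_out; auto].
  rewrite translate_in, vadd_vneg by (rewrite ?length_vneg, ?length_zeros; auto).
  subst d. apply vsub_zeros.
Qed.

Lemma Summable_translate s f : Summable f -> Summable (fun y => f (translate s y)).
Proof.
  apply (Summable_bij (translate s) (translate (vneg s)));
    intros; [apply translate_vneg_l|apply translate_vneg_r].
Qed.

Lemma Sum_translate s f : Summable f -> Sum (fun y => f (translate s y)) = Sum f.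
Proof.
  apply (Sum_bij (translate s) (translate (vneg s)));
    intros; [apply translate_vneg_l|apply translate_vneg_r].
Qed.

Lemma push_vadd (f : vec -> R) e x : (forall y, f y <> 0 -> length y = d) -> length e = d ->
  push (fun w => vadd w e) f x = f (translate (vneg e) x).
Proof.
  intros Hf He. unfold push. rewrite (Sum_single _ (translate (vneg e) x)).
  - destruct veq_dec as [_|Hne]; auto. destruct (Req_dec (f (translate (vneg e) x)) 0) as [|Hnz]; auto.
    exfalso. apply Hne. destruct (Nat.eq_dec (length x) d) as [Hx|Hx].
    + rewrite translate_in, vadd_vneg, vadd_vsub_r; rewrite ?length_vneg; auto; lia.
    + rewrite translate_out in Hnz; auto. apply Hf in Hnz. contradiction.
  - intros y Hy. destruct veq_dec as [<-|]; auto. destruct (Req_dec (f y) 0) as [|Hnz]; auto.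
    exfalso. apply Hy. apply Hf in Hnz. rewrite translate_in, vadd_vneg, vsub_vadd_r;
      rewrite ?length_vadd, ?length_vneg; auto; lia.
Qed.

Section ShiftGap.
Variable f : vec -> R.
Hypotheses (f_nonneg : forall y, 0 <= f y) (f_summable : Summable f).

Definition shift_gap (s : vec) : R := Sum (fun y => Rabs (f (translate (vneg s) y) - f y)).

Lemma Summable_shift_gap s : Summable (fun y => Rabs (f (translate (vneg s) y) - f y)).
Proof.
  apply (Summable_le _ (fun y => f (translate (vneg s) y) + f y)).
  - intros; apply Rabs_pos.
  - intros y. pose proof (f_nonneg y). pose proof (f_nonneg (translate (vneg s) y)). split_Rabs; lra.
  - apply Summable_plus; auto. apply Summable_translate; auto.
Qed.

Lemma shift_gap_zeros : shift_gap (zeros d) = 0.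
Proof.
  apply Sum_zero. intros y. rewrite translate_vneg_zeros, Rminus_diag. apply Rabs_R0.
Qed.

Lemma shift_gap_vadd J s : length J = d -> length s = d ->
  shift_gap (vadd J s) <= shift_gap J + shift_gap s.
Proof.
  intros HJ Hs. unfold shift_gap.
  pose proof (Summable_shift_gap J) as HsJ. pose proof (Summable_shift_gap s) as Hss.
  pose proof (Summable_translate (vneg s) _ HsJ) as HsJs; simpl in HsJs.
  rewrite <- (Sum_translate (vneg s) _ HsJ), <- Sum_plus by auto.
  apply Sum_le; auto using Summable_plus.
  - apply Summable_shift_gap.
  - intros y. rewrite translate_vneg_vadd by auto. split_Rabs; lra.
Qed.

Lemma shift_gap_vsum Js : (forall J, In J Js -> length J = d) ->
  shift_gap (vsum d Js) <= sum_list shift_gap Js.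
Proof.
  induction Js as [|J Js IH]; intros HJs; simpl.
  - rewrite shift_gap_zeros; lra.
  - assert (HJ : length J = d) by (apply HJs; left; auto).
    assert (HJs' : forall J', In J' Js -> length J' = d) by (intros; apply HJs; right; auto).
    pose proof (shift_gap_vadd J (vsum d Js) HJ (length_vsum d Js HJs')). specialize (IH HJs'). lra.
Qed.

Lemma dTV_push_vadd e : (forall y, f y <> 0 -> length y = d) -> length e = d ->
  dTV (push (fun w => vadd w e) f) f <= shift_gap e.
Proof.
  intros Hsupp He.
  assert (Hpush : forall x, push (fun w => vadd w e) f x = f (translate (vneg e) x))
    by (intros; apply push_vadd; auto).
  eapply Rle_trans; [apply dTV_le_Sum_abs; auto|].
  - intros x; rewrite Hpush; auto.
  - eapply Summable_ext; [intros x; symmetry; apply Hpush|].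
    apply Summable_translate; auto.
  - right. apply Sum_ext. intros x; rewrite Hpush; auto.
Qed.
End ShiftGap.
End Translation.

(** * The exchangeable pair *)

Section ExchangeablePair.
Variables (d : nat) (p : vec -> vec -> R).
Hypotheses (p_nonneg : forall w w', 0 <= p w w')
  (p_support : forall w w', p w w' <> 0 -> length w = d /\ length w' = d)
  (p_sum : has_sum (fun ww : vec * vec => p (fst ww) (snd ww)) 1)
  (p_exch : forall w w', p w w' = p w' w).

Notation translate := (translate d).

Lemma p_out_l w w' : length w <> d -> p w w' = 0.
Proof. intros H. destruct (Req_dec (p w w') 0) as [|Hnz]; auto. apply p_support in Hnz; tauto. Qed.

Lemma p_out_r w w' : length w' <> d -> p w w' = 0.
Proof. intros H. destruct (Req_dec (p w w') 0) as [|Hnz]; auto. apply p_support in Hnz; tauto. Qed.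

Lemma Summable_p_row w : Summable (p w).
Proof. exact (Summable_slice (fun x => p (fst x) (snd x)) (fun _ => p_nonneg _ _) 1 w p_sum). Qed.

Lemma has_sum_pW : has_sum (pW p) 1.
Proof. exact (has_sum_iter (fun x => p (fst x) (snd x)) (fun _ => p_nonneg _ _) 1 p_sum). Qed.

Lemma Summable_pW : Summable (pW p). Proof. exists 1; apply has_sum_pW. Qed.

Lemma pW_nonneg w : 0 <= pW p w. Proof. apply Sum_nonneg; auto. Qed.

Lemma pW_out w : length w <> d -> pW p w = 0.
Proof. intros H. apply Sum_zero. intros; apply p_out_l; auto. Qed.

Lemma pW_support w : pW p w <> 0 -> length w = d.
Proof. intros H. destruct (Nat.eq_dec (length w) d); auto. exfalso; apply H, pW_out; auto. Qed.

Lemma p_le_pW w w' : p w w' <= pW p w.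
Proof.
  pose proof (Sum_nonneg_ub (p w) (p_nonneg w) [w'] (Summable_p_row w) ltac:(repeat constructor; auto)).
  change (pW p w) with (Sum (p w)). simpl in *. lra.
Qed.

Lemma pWxi_eq w J : pWxi p w J = p w (translate w J).
Proof.
  unfold pWxi. rewrite (Sum_single _ (translate w J)).
  - destruct veq_dec as [_|Hne]; auto. symmetry.
    destruct (Req_dec (p w (translate w J)) 0) as [|Hnz]; auto.
    exfalso. apply p_support in Hnz as [Hw HwJ]. apply Hne, vsub_translate; auto.
  - intros w' Hne. destruct veq_dec as [<-|]; auto. destruct (Req_dec (p w w') 0) as [|Hnz]; auto.
    exfalso. apply p_support in Hnz as [Hw Hw']. apply Hne.
    rewrite translate_in, vadd_comm, vadd_vsub_l; rewrite ?length_vsub; auto; lia.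
Qed.

Lemma pWxi_nonneg w J : 0 <= pWxi p w J. Proof. rewrite pWxi_eq; auto. Qed.

Lemma pWxi_le_pW w J : pWxi p w J <= pW p w. Proof. rewrite pWxi_eq; apply p_le_pW. Qed.

Lemma pWxi_support w J : pWxi p w J <> 0 -> length w = d /\ length J = d.
Proof.
  rewrite pWxi_eq. intros Hnz. apply p_support in Hnz as [Hw HwJ]. split; auto.
  destruct (Nat.eq_dec (length J) d) as [|HJ]; auto. rewrite translate_out in HwJ; auto.
Qed.

Lemma Summable_pWxi_col J : Summable (fun w => pWxi p w J).
Proof. apply (Summable_le _ (pW p)); auto using pWxi_nonneg, pWxi_le_pW, Summable_pW. Qed.

Lemma qJ_nonneg J : 0 <= qJ p J. Proof. apply Sum_nonneg; intros; apply pWxi_nonneg. Qed.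

Lemma qJ_support J : 0 < qJ p J -> length J = d.
Proof.
  intros Hq. destruct (Nat.eq_dec (length J) d) as [|HJ]; auto. exfalso.
  assert (qJ p J = 0); [|lra]. apply Sum_zero. intros w.
  destruct (Req_dec (pWxi p w J) 0) as [|Hnz]; auto. apply pWxi_support in Hnz; tauto.
Qed.

(* Exchangeability: the jump [J] out of [w] is the jump [-J] back out of [w + J]. *)
Lemma pWxi_reflect w J : pWxi p (translate J w) (vneg J) = pWxi p w J.
Proof.
  rewrite !pWxi_eq.
  destruct (Nat.eq_dec (length J) d) as [HJ|HJ]; [destruct (Nat.eq_dec (length w) d) as [Hw|Hw]|].
  - assert (HwJ : length (vadd w J) = d) by (rewrite length_vadd; lia).
    rewrite (translate_in d J w), (translate_in d (vadd w J)), (translate_in d w J);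
      rewrite ?length_vneg; auto.
    rewrite (vadd_comm (vneg J)), vadd_vneg, vsub_vadd_r, p_exch, (vadd_comm J w); auto; lia.
  - rewrite !(translate_out d J w), !p_out_l; auto.
  - rewrite (translate_out d J w), (translate_out d w J), (translate_out d w (vneg J));
      rewrite ?length_vneg; auto.
    rewrite !p_out_r; rewrite ?length_vneg; auto.
Qed.

Lemma qJ_vneg J : qJ p (vneg J) = qJ p J.
Proof.
  unfold qJ. rewrite <- (Sum_translate d J _ (Summable_pWxi_col (vneg J))).
  apply Sum_ext; intros w; apply pWxi_reflect.
Qed.

Lemma condW_nonneg J w : 0 <= condW p J w.
Proof.
  unfold condW, Rdiv. pose proof (qJ_nonneg J). pose proof (pWxi_nonneg w J).
  destruct (Req_dec (qJ p J) 0) as [->|Hq]; [rewrite Rinv_0; lra|].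
  apply Rmult_le_pos; [lra|left; apply Rinv_0_lt_compat; lra].
Qed.

Lemma condW_support J w : condW p J w <> 0 -> length w = d.
Proof.
  unfold condW. intros H. destruct (Req_dec (pWxi p w J) 0) as [Hz|Hnz].
  - rewrite Hz in H. lra.
  - apply pWxi_support in Hnz; tauto.
Qed.

Lemma Summable_condW J : Summable (condW p J).
Proof.
  eapply Summable_ext; [|apply (Summable_scal (/ qJ p J)), (Summable_pWxi_col J)].
  intros w; simpl. unfold condW, Rdiv. ring.
Qed.

Lemma condW_reflect J y : condW p J (translate (vneg J) y) = condW p (vneg J) y.
Proof.
  unfold condW. rewrite qJ_vneg, <- (pWxi_reflect (translate (vneg J) y) J), translate_vneg_r.
  reflexivity.
Qed.

Definition dev (J w : vec) : R := pW p w * Rabs (QJ p J w - qJ p J).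

Lemma dev_eq J w : dev J w = Rabs (pWxi p w J - pW p w * qJ p J).
Proof.
  unfold dev, QJ. pose proof (pW_nonneg w). destruct Rlt_dec as [Hpos|Hz].
  - replace (pWxi p w J - pW p w * qJ p J) with (pW p w * (pWxi p w J / pW p w - qJ p J))
      by (field; lra).
    rewrite Rabs_mult, (Rabs_pos_eq (pW p w)); lra.
  - assert (Hw : pW p w = 0) by lra. pose proof (pWxi_le_pW w J). pose proof (pWxi_nonneg w J).
    rewrite Hw in *. replace (pWxi p w J) with 0 by lra. rewrite !Rmult_0_l, Rminus_diag, Rabs_R0; auto.
Qed.

Lemma dev_nonneg J w : 0 <= dev J w. Proof. rewrite dev_eq; apply Rabs_pos. Qed.

Lemma dev_le J w : dev J w <= pWxi p w J + qJ p J * pW p w.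
Proof.
  rewrite dev_eq. pose proof (pWxi_nonneg w J). pose proof (qJ_nonneg J). pose proof (pW_nonneg w).
  pose proof (Rmult_le_pos _ _ (qJ_nonneg J) (pW_nonneg w)). split_Rabs; nra.
Qed.

Lemma Summable_dev J : Summable (dev J).
Proof.
  apply (Summable_le _ _ (dev_nonneg J) (dev_le J)).
  apply Summable_plus; [apply Summable_pWxi_col|apply Summable_scal, Summable_pW].
Qed.

Lemma Sum_dev_le J : Sum (dev J) <= 2 * qJ p J.
Proof.
  eapply Rle_trans; [apply Sum_le; [apply Summable_dev| |apply dev_le]|].
  - apply Summable_plus; [apply Summable_pWxi_col|apply Summable_scal, Summable_pW].
  - rewrite Sum_plus, Sum_scal, (Sum_eq _ _ has_sum_pW);
      [unfold qJ; lra|apply Summable_pW|apply Summable_pWxi_col|apply Summable_scal, Summable_pW].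
Qed.

Lemma Sum_dev J : 0 < qJ p J -> Sum (dev J) = qJ p J * uJ p J.
Proof. intros Hq. unfold uJ, dev. field. lra. Qed.

Lemma uJ_nonneg J : 0 < qJ p J -> 0 <= uJ p J.
Proof.
  intros Hq. unfold uJ. apply Rmult_le_pos; [left; apply Rinv_0_lt_compat; auto|].
  apply Sum_nonneg, dev_nonneg.
Qed.

Lemma uJ_le_2 J : 0 < qJ p J -> uJ p J <= 2.
Proof. intros Hq. pose proof (Sum_dev_le J). rewrite Sum_dev in *; auto. nra. Qed.

Lemma ustar_bound : bound (fun x => exists J, 0 < qJ p J /\ x = uJ p J).
Proof. exists 2. intros x [J [Hq ->]]. apply uJ_le_2; auto. Qed.

Lemma uJ_le_ustar J : 0 < qJ p J -> uJ p J <= ustar p.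
Proof. intros Hq. apply Rsup_ge; [apply ustar_bound|eauto]. Qed.

Lemma ustar_nonneg : 0 <= ustar p.
Proof. apply Rsup_nonneg; [apply ustar_bound|]. intros x [J [Hq ->]]. apply uJ_nonneg; auto. Qed.

Lemma Sum_dev_le_ustar J : Sum (dev J) <= qJ p J * ustar p.
Proof.
  pose proof (qJ_nonneg J). destruct (Rlt_dec 0 (qJ p J)) as [Hq|Hq].
  - rewrite Sum_dev by auto. pose proof (uJ_le_ustar J Hq). nra.
  - assert (Hq0 : qJ p J = 0) by lra.
    pose proof (Sum_dev_le J). pose proof (Sum_nonneg _ (dev_nonneg J)).
    rewrite Hq0 in *. lra.
Qed.

Lemma Rabs_pW_condW J z : 0 < qJ p J -> Rabs (pW p z - condW p J z) = / qJ p J * dev J z.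
Proof.
  intros Hq. rewrite dev_eq. unfold condW.
  replace (pW p z - pWxi p z J / qJ p J) with (/ qJ p J * - (pWxi p z J - pW p z * qJ p J))
    by (field; lra).
  rewrite Rabs_mult, Rabs_Ropp, Rabs_pos_eq; auto. left; apply Rinv_0_lt_compat; auto.
Qed.

Lemma Summable_pW_condW J : Summable (fun z => Rabs (pW p z - condW p J z)).
Proof.
  apply (Summable_le _ (fun z => pW p z + condW p J z)); [intros; apply Rabs_pos| |].
  - intros z. pose proof (pW_nonneg z). pose proof (condW_nonneg J z). split_Rabs; lra.
  - apply Summable_plus; [apply Summable_pW|apply Summable_condW].
Qed.

Lemma Sum_pW_condW J : 0 < qJ p J -> Sum (fun z => Rabs (pW p z - condW p J z)) = uJ p J.
Proof.
  intros Hq. rewrite (Sum_ext _ _ (fun z => Rabs_pW_condW J z Hq)), Sum_scal by apply Summable_dev.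
  reflexivity.
Qed.

Lemma shift_gap_pW_le J : 0 < qJ p J -> shift_gap d (pW p) J <= uJ p J + uJ p (vneg J).
Proof.
  intros Hq. assert (Hq' : 0 < qJ p (vneg J)) by (rewrite qJ_vneg; auto).
  pose proof (Summable_translate d (vneg J) _ (Summable_pW_condW J)) as HJ; simpl in HJ.
  pose proof (Summable_pW_condW (vneg J)) as HnJ.
  unfold shift_gap. rewrite <- (Sum_pW_condW J Hq), <- (Sum_pW_condW (vneg J) Hq').
  rewrite <- (Sum_translate d (vneg J) _ (Summable_pW_condW J)), <- Sum_plus by auto.
  apply Sum_le; auto using Summable_shift_gap, pW_nonneg, Summable_pW, Summable_plus.
  intros y. rewrite condW_reflect. split_Rabs; lra.
Qed.

Lemma shift_gap_pW_vsum Js : (forall J, In J Js -> 0 < qJ p J) ->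
  shift_gap d (pW p) (vsum d Js) <= ut p Js.
Proof.
  intros Hq. eapply Rle_trans.
  - apply (shift_gap_vsum d (pW p) pW_nonneg Summable_pW). intros; apply qJ_support; auto.
  - apply sum_list_le. intros J HJ. apply shift_gap_pW_le; auto.
Qed.

Lemma dTV_push_vsum_pW Js : (forall J, In J Js -> 0 < qJ p J) ->
  dTV (push (fun w => vadd w (vsum d Js)) (pW p)) (pW p) <= ut p Js.
Proof.
  intros Hq. eapply Rle_trans; [|apply shift_gap_pW_vsum; auto].
  apply (dTV_push_vadd d (pW p) pW_nonneg Summable_pW); [apply pW_support|].
  apply length_vsum. intros; apply qJ_support; auto.
Qed.

Lemma dTV_push_vsum_condW Js J : (forall J', In J' Js -> 0 < qJ p J') -> 0 < qJ p J ->
  dTV (push (fun w => vadd w (vsum d Js)) (condW p J)) (condW p J) <= ut p Js + 2 * uJ p J.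
Proof.
  intros HJs Hq. set (e := vsum d Js).
  assert (He : length e = d) by (apply length_vsum; intros; apply qJ_support; auto).
  eapply Rle_trans.
  { exact (dTV_push_vadd d (condW p J) (condW_nonneg J) (Summable_condW J) e (condW_support J) He). }
  pose proof (shift_gap_pW_vsum Js HJs) as Hgap. fold e in Hgap.
  pose proof (Sum_pW_condW J Hq) as HuJ.
  pose proof (Summable_translate d (vneg e) _ (Summable_pW_condW J)) as Htr; simpl in Htr.
  rewrite <- (Sum_translate d (vneg e) _ (Summable_pW_condW J)) in HuJ.
  unfold shift_gap in *.
  eapply Rle_trans.
  - apply (Sum_le _ (fun y => (Rabs (pW p (translate (vneg e) y) - condW p J (translate (vneg e) y))
                             + Rabs (pW p (translate (vneg e) y) - pW p y))
                             + Rabs (pW p y - condW p J y)));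
      auto using Summable_shift_gap, condW_nonneg, Summable_condW, Summable_plus,
        pW_nonneg, Summable_pW, Summable_pW_condW.
    intros y. split_Rabs; lra.
  - rewrite !Sum_plus;
      auto using Summable_shift_gap, pW_nonneg, Summable_pW, Summable_plus, Summable_pW_condW.
    rewrite (Sum_pW_condW J Hq). lra.
Qed.

Section SecondMoment.
Hypothesis p_moment : second_moment_finite p.

Definition coord (i : nat) (v : vec) : R := IZR (nth i v 0%Z).
Definition mom (i k : nat) (J : vec) : R := coord i J * coord k J.

Definition xi_term (i k : nat) (x : vec * vec) : R := p (fst x) (snd x) * (xc i x * xc k x).
Definition jump_term (i k : nat) (x : vec * vec) : R := pWxi p (fst x) (snd x) * mom i k (snd x).

Definition jump_to_pair (x : vec * vec) : vec * vec := (fst x, translate (fst x) (snd x)).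
Definition pair_to_jump (y : vec * vec) : vec * vec := (fst y, translate (vneg (fst y)) (snd y)).

Lemma pair_to_jump_to_pair x : pair_to_jump (jump_to_pair x) = x.
Proof. destruct x; unfold pair_to_jump, jump_to_pair; simpl. rewrite translate_vneg_l; auto. Qed.

Lemma jump_to_pair_to_jump y : jump_to_pair (pair_to_jump y) = y.
Proof. destruct y; unfold pair_to_jump, jump_to_pair; simpl. rewrite translate_vneg_r; auto. Qed.

Lemma xi_term_jump i k x : xi_term i k (jump_to_pair x) = jump_term i k x.
Proof.
  destruct x as [w J]. unfold xi_term, jump_term, jump_to_pair, xc; simpl. rewrite pWxi_eq.
  destruct (Req_dec (p w (translate w J)) 0) as [->|Hnz]; [ring|].
  apply p_support in Hnz as [Hw HwJ]. rewrite vsub_translate; auto.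
Qed.

Lemma Rabs_mom_le i k v : Rabs (mom i k v) <= norm2 v.
Proof.
  unfold mom, coord. pose proof (sq_nth_le_norm2 i v). pose proof (sq_nth_le_norm2 k v).
  rewrite Rabs_mult. split_Rabs; nra.
Qed.

Lemma Summable_abs_xi_term i k : Summable (fun x => Rabs (xi_term i k x)).
Proof.
  destruct p_moment as [s Hs].
  apply (Summable_le _ (fun x => p (fst x) (snd x) * norm2 (vsub (snd x) (fst x))));
    [intros; apply Rabs_pos| |exists s; auto].
  intros [w w']. unfold xi_term; simpl. rewrite Rabs_mult, Rabs_pos_eq by auto.
  apply Rmult_le_compat_l; auto. apply Rabs_mom_le.
Qed.

Lemma Summable_abs_jump_term i k : Summable (fun x => Rabs (jump_term i k x)).
Proof.
  eapply Summable_ext; [|apply (Summable_bij jump_to_pair pair_to_jump pair_to_jump_to_pair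
    jump_to_pair_to_jump (fun x => Rabs (xi_term i k x))), Summable_abs_xi_term].
  intros x; simpl. rewrite xi_term_jump. reflexivity.
Qed.

Lemma has_sum_jump_term i k : has_sum (jump_term i k) (sigma2 p i k).
Proof.
  eapply has_sum_ext; [intros x; apply xi_term_jump|].
  apply (has_sum_bij jump_to_pair pair_to_jump pair_to_jump_to_pair jump_to_pair_to_jump).
  apply Sum_spec, Summable_of_abs, Summable_abs_xi_term.
Qed.

Lemma Sum_jump_term_col i k J : Sum (fun w => jump_term i k (w, J)) = mom i k J * qJ p J.
Proof.
  unfold jump_term, qJ; simpl. rewrite <- Sum_scal by apply Summable_pWxi_col.
  apply Sum_ext; intros; ring.
Qed.

Lemma has_sum_mom_qJ i k : has_sum (fun J => mom i k J * qJ p J) (sigma2 p i k).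
Proof.
  set (F := fun x : vec * vec => jump_term i k (snd x, fst x)).
  assert (HF : has_sum F (sigma2 p i k)) by apply (has_sum_swap (jump_term i k)), has_sum_jump_term.
  assert (HFa : Summable (fun x => Rabs (F x))).
  { destruct (Summable_abs_jump_term i k) as [s Hs].
    exists s. apply (has_sum_swap (fun x => Rabs (jump_term i k x))); auto. }
  destruct (fubini F HFa) as [_ Hiter]. rewrite (Sum_eq _ _ HF) in Hiter.
  eapply has_sum_ext; [|apply Hiter]. intros J. unfold F; simpl. apply Sum_jump_term_col.
Qed.

Lemma Summable_abs_mom_qJ i k : Summable (fun J => Rabs (mom i k J) * qJ p J).
Proof.
  destruct (Summable_abs_jump_term i k) as [s Hs]. exists s.
  eapply has_sum_ext;
    [|apply (has_sum_iter (fun x => Rabs (jump_term i k (snd x, fst x))) (fun _ => Rabs_pos _)),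
      (has_sum_swap (fun x => Rabs (jump_term i k x))); auto].
  intros J; simpl. unfold jump_term, qJ; simpl. rewrite <- Sum_scal by apply Summable_pWxi_col.
  apply Sum_ext; intros w. rewrite Rabs_mult, (Rabs_pos_eq (pWxi p w J)) by apply pWxi_nonneg. ring.
Qed.

Lemma Summable_jump_term_row i k w :
  Summable (fun J => jump_term i k (w, J)) /\ Summable (fun J => Rabs (jump_term i k (w, J))).
Proof.
  split; [apply (fubini (jump_term i k) (Summable_abs_jump_term i k))|].
  destruct (Summable_abs_jump_term i k) as [s Hs].
  exact (Summable_slice (fun x => Rabs (jump_term i k x)) (fun _ => Rabs_pos _) s w Hs).
Qed.

Lemma condxx_numerator i k w :
  Sum (fun w' => p w w' * (xc i (w, w') * xc k (w, w'))) = Sum (fun J => jump_term i k (w, J)).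
Proof.
  change (Sum (fun w' => xi_term i k (w, w')) = Sum (fun J => jump_term i k (w, J))).
  rewrite <- (Sum_translate d w (fun w' => xi_term i k (w, w'))).
  - apply Sum_ext; intros J. apply (xi_term_jump i k (w, J)).
  - apply (fubini (xi_term i k) (Summable_abs_xi_term i k)).
Qed.

Definition R2_majorant (i k : nat) (w : vec) : R := Sum (fun J => Rabs (mom i k J) * dev J w).

Lemma Summable_R2_majorant_row i k w : Summable (fun J => Rabs (mom i k J) * dev J w).
Proof.
  apply (Summable_le _ (fun J => Rabs (jump_term i k (w, J)) + pW p w * (Rabs (mom i k J) * qJ p J))).
  - intros J; apply Rmult_le_pos; [apply Rabs_pos|apply dev_nonneg].
  - intros J. unfold jump_term; simpl.
    rewrite Rabs_mult, (Rabs_pos_eq (pWxi p w J)) by apply pWxi_nonneg.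
    pose proof (dev_le J w). pose proof (Rabs_pos (mom i k J)). nra.
  - apply Summable_plus; [apply Summable_jump_term_row|apply Summable_scal, Summable_abs_mom_qJ].
Qed.

Lemma R2_entry_le i k w : pW p w * Rabs (condxx p i k w - sigma2 p i k) <= R2_majorant i k w.
Proof.
  unfold condxx. destruct (Rlt_dec 0 (pW p w)) as [Hw|Hw].
  - rewrite condxx_numerator.
    replace (pW p w * Rabs (Sum (fun J => jump_term i k (w, J)) / pW p w - sigma2 p i k))
      with (Rabs (Sum (fun J => jump_term i k (w, J)) - pW p w * sigma2 p i k)).
    2:{ rewrite <- (Rabs_pos_eq (pW p w)) at 2 by lra. rewrite <- Rabs_mult. f_equal. field. lra. }
    rewrite <- (Sum_eq _ _ (has_sum_mom_qJ i k)), <- Sum_scal, <- Sum_minus;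
      [|apply Summable_jump_term_row|apply Summable_scal|]; try (eexists; apply has_sum_mom_qJ).
    assert (Hterm : forall J, Rabs (jump_term i k (w, J) - pW p w * (mom i k J * qJ p J))
                              = Rabs (mom i k J) * dev J w).
    { intros J. unfold jump_term; simpl. rewrite dev_eq, <- Rabs_mult. f_equal. ring. }
    unfold R2_majorant. rewrite <- (Sum_ext _ _ Hterm). apply Rabs_Sum_le.
    eapply Summable_ext; [intros J; symmetry; apply Hterm|apply Summable_R2_majorant_row].
  - assert (Hz : pW p w = 0) by (pose proof (pW_nonneg w); lra). rewrite Hz, Rmult_0_l.
    apply Sum_nonneg. intros J; apply Rmult_le_pos; [apply Rabs_pos|apply dev_nonneg].
Qed.

Lemma Summable_abs_mom_Sum_dev i k : Summable (fun J => Rabs (mom i k J) * Sum (dev J)).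
Proof.
  apply (Summable_le _ (fun J => 2 * (Rabs (mom i k J) * qJ p J))).
  - intros J; apply Rmult_le_pos; [apply Rabs_pos|apply Sum_nonneg, dev_nonneg].
  - intros J. pose proof (Sum_dev_le J). pose proof (Rabs_pos (mom i k J)). nra.
  - apply Summable_scal, Summable_abs_mom_qJ.
Qed.

Lemma has_sum_R2_majorant i k :
  has_sum (R2_majorant i k) (Sum (fun J => Rabs (mom i k J) * Sum (dev J))).
Proof.
  apply (has_sum_iter_swap (fun x => Rabs (mom i k (fst x)) * dev (fst x) (snd x))
    (fun J => Rabs (mom i k J) * Sum (dev J))).
  - intros x; apply Rmult_le_pos; [apply Rabs_pos|apply dev_nonneg].
  - intros J; simpl. apply has_sum_scal, Sum_spec, Summable_dev.
  - apply Sum_spec, Summable_abs_mom_Sum_dev.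
Qed.

Lemma Sum_R2_majorant_le i k : Sum (R2_majorant i k) <= ustar p * ((sigma2 p i i + sigma2 p k k) / 2).
Proof.
  rewrite (Sum_eq _ _ (has_sum_R2_majorant i k)).
  assert (Hmom : has_sum (fun J => ustar p * ((mom i i J * qJ p J + mom k k J * qJ p J) / 2))
                         (ustar p * ((sigma2 p i i + sigma2 p k k) / 2))).
  { replace ((sigma2 p i i + sigma2 p k k) / 2) with (/ 2 * (sigma2 p i i + sigma2 p k k)) by field.
    eapply has_sum_ext; [|apply has_sum_scal, has_sum_scal, has_sum_plus; apply has_sum_mom_qJ].
    intros J; simpl; field. }
  rewrite <- (Sum_eq _ _ Hmom). apply Sum_le; [apply Summable_abs_mom_Sum_dev|eexists; apply Hmom|].
  intros J.
  assert (Havg : Rabs (mom i k J) <= (mom i i J + mom k k J) / 2)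
    by (unfold mom; apply Rabs_le; pose proof (Rle_0_sqr (coord i J - coord k J));
        pose proof (Rle_0_sqr (coord i J + coord k J)); unfold Rsqr in *; split; lra).
  apply Rle_trans with (Rabs (mom i k J) * (qJ p J * ustar p));
    [apply Rmult_le_compat_l; [apply Rabs_pos|apply Sum_dev_le_ustar]|].
  apply Rle_trans with ((mom i i J + mom k k J) / 2 * (qJ p J * ustar p)); [|right; field].
  apply Rmult_le_compat_r; auto. apply Rmult_le_pos; [apply qJ_nonneg|apply ustar_nonneg].
Qed.

Lemma ER2norm1_le : ER2norm1 d p <= INR d * trace_sigma2 d p * ustar p.
Proof.
  unfold ER2norm1, trace_sigma2. set (l := seq 0 d).
  set (B := fun w => sum_list (fun i => sum_list (fun k => R2_majorant i k w) l) l).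
  assert (Hrow : forall i, Summable (fun w => sum_list (fun k => R2_majorant i k w) l) /\
      Sum (fun w => sum_list (fun k => R2_majorant i k w) l)
      = sum_list (fun k => Sum (R2_majorant i k)) l)
    by (intros i; apply Sum_sum_list; intros k _; eexists; apply has_sum_R2_majorant; auto).
  destruct (Sum_sum_list (fun i w => sum_list (fun k => R2_majorant i k w) l) l) as [HBs HBe];
    [intros i _; apply Hrow|].
  assert (Hle : forall w, pW p w * sum_list (fun i => sum_list (fun k =>
      Rabs (condxx p i k w - sigma2 p i k)) l) l <= B w).
  { intros w. unfold B. rewrite <- sum_list_scal. apply sum_list_le; intros i _.
    rewrite <- sum_list_scal. apply sum_list_le; intros k _. apply R2_entry_le; auto. }
  assert (Hnn : forall w, 0 <= pW p w * sum_list (fun i => sum_list (fun k =>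
      Rabs (condxx p i k w - sigma2 p i k)) l) l).
  { intros w. apply Rmult_le_pos; [apply pW_nonneg|].
    apply sum_list_nonneg; intros; apply sum_list_nonneg; intros; apply Rabs_pos. }
  apply Rle_trans with (Sum B); [apply Sum_le; auto; apply (Summable_le _ B); auto|].
  unfold B. rewrite HBe, (sum_list_ext _ _ l (fun i _ => proj2 (Hrow i))).
  apply Rle_trans with
    (sum_list (fun i => ustar p * sum_list (fun k => (sigma2 p i i + sigma2 p k k) / 2) l) l).
  - apply sum_list_le; intros i _. rewrite <- sum_list_scal.
    apply sum_list_le; intros k _. apply Sum_R2_majorant_le; auto.
  - rewrite sum_list_scal, (sum_list_sum_list_avg (fun i => sigma2 p i i)).
    unfold l; rewrite length_seq. right; ring.
Qed.
End SecondMoment.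
End ExchangeablePair.

Lemma fold_right_Rmax_ge x l : In x l -> x <= fold_right Rmax 0 l.
Proof.
  induction l as [|a l IH]; simpl; [tauto|]. intros [->|H].
  - apply Rmax_l.
  - eapply Rle_trans; [apply IH; auto|apply Rmax_r].
Qed.

Lemma ut_le_utstar d p Jc j : (j < d)%nat -> ut p (Jc j) <= utstar d p Jc.
Proof. intros Hj. apply fold_right_Rmax_ge, (in_map (fun j => ut p (Jc j))), in_seq. lia. Qed.

Theorem lemma4p3 (d : nat) (p : vec -> vec -> R) (Jc : nat -> list vec)
  (Hpmf : is_joint_pmf d p)
  (Hexch : forall w w', p w w' = p w' w)
  (H2 : second_moment_finite p)
  (HJc : forall j, (j < d)%nat ->
           (forall J, In J (Jc j) -> 0 < qJ p J) /\ vsum d (Jc j) = unitv d j) :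
  (forall j, (j < d)%nat ->
     dTV (push (fun w => vadd w (unitv d j)) (pW p)) (pW p) <= ut p (Jc j) /\
     ut p (Jc j) <= utstar d p Jc) /\
  (forall j J, (j < d)%nat -> 0 < qJ p J ->
     dTV (push (fun w => vadd w (unitv d j)) (condW p J)) (condW p J)
       <= ut p (Jc j) + 2 * uJ p J /\
     ut p (Jc j) + 2 * uJ p J <= utstar d p Jc + 2 * ustar p) /\
  ER2norm1 d p <= INR d * trace_sigma2 d p * ustar p.
Proof.
  destruct Hpmf as [Hnn [Hsupp Hsum]].
  split; [|split].
  - intros j Hj. destruct (HJc j Hj) as [Hq <-].
    split; [apply dTV_push_vsum_pW|apply ut_le_utstar]; auto.
  - intros j J Hj HqJ. destruct (HJc j Hj) as [Hq <-].
    split; [apply dTV_push_vsum_condW; auto|].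
    pose proof (uJ_le_ustar d p Hnn Hsupp Hsum J HqJ). pose proof (ut_le_utstar d p Jc j Hj). lra.
  - apply ER2norm1_le; auto.
Qed.
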